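(* Let $A\in\mathbb R^{m\times n}$, and let $\omega:\mathbb R^m\to\mathbb R$ be convex (finite everywhere) and globally $K_\omega$-Lipschitz continuous. Fix $y\in\mathbb R^n$ and $\lambda>0$ and define $$\Phi_\lambda(u)=\omega(Au)+\frac1{2\lambda}\|u-y\|^2\ (u\in\mathbb R^n),\qquad \Psi_\lambda(v)=\frac1{2\lambda}\|\lambda A^\top v-y\|^2+\omega^\star(v)-\frac1{2\lambda}\|y\|^2\ (v\in\mathbb R^m).$$ Let $\bar v$ be a minimizer of $\Psi_\lambda$, let $(v_j)_{j\ge0}\subseteq\mathbb R^m$ satisfy $\lim_{j\to\infty}\Psi_\lambda(v_j)=\Psi_\lambda(\bar v)$, and set $z_j=y-\lambda A^\top v_j$ and $\bar z=y-\lambda A^\top\bar v$. Then: (i) $\bar z$ is a minimizer of $\Phi_\lambda$; (ii) $\Psi_\lambda(v_j)-\Psi_\lambda(\bar v)\ge\frac1{2\lambda}\|z_j-\bar z\|^2$ for all $j$, and consequently $z_j\to\bar z$; (iii) for all $j$, $$\Phi_\lambda(z_j)-\Phi_\lambda(\bar z)\le\sqrt{\Psi_\lambda(v_j)-\Psi_\lambda(\bar v)}\Big(2\sqrt{2\lambda}\,K_\omega\|A\|+\sqrt{\Psi_\lambda(v_j)-\Psi_\lambda(\bar v)}\Big).$$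
   Context: $\omega^\star(v)=\sup_{z\in\mathbb R^m}\{\langle z,v\rangle-\omega(z)\}$ is the Fenchel conjugate; $\|A\|$ is the operator (spectral) norm. *)

From HB Require Import structures.
From mathcomp Require Import all_boot all_order all_algebra.
From mathcomp Require Import all_classical all_reals all_analysis.
Set Implicit Arguments. Unset Strict Implicit. Unset Printing Implicit Defensive.
Import Order.TTheory GRing.Theory Num.Theory.
Local Open Scope ring_scope.
Local Open Scope classical_set_scope.

Section Defs.
Variable R : realType.

Definition dotv (k : nat) (u v : 'cV[R]_k) : R := \sum_(i < k) u i 0 * v i 0.

Definition enorm (k : nat) (u : 'cV[R]_k) : R := Num.sqrt (dotv u u).

Definition opnorm (m n : nat) (A : 'M[R]_(m, n)) : R :=
  sup [set enorm (A *m x) | x in [set x : 'cV[R]_n | enorm x <= 1]].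

Definition convex_fun (k : nat) (f : 'cV[R]_k -> R) : Prop :=
  forall (x y : 'cV[R]_k) (t : R), 0 <= t -> t <= 1 ->
    f (t *: x + (1 - t) *: y) <= t * f x + (1 - t) * f y.

Definition lipschitz_with (k : nat) (K : R) (f : 'cV[R]_k -> R) : Prop :=
  forall x y : 'cV[R]_k, `|f x - f y| <= K * enorm (x - y).

Definition fconj (k : nat) (f : 'cV[R]_k -> R) (v : 'cV[R]_k) : \bar R :=
  ereal_sup [set (dotv z v - f z)%:E | z in [set: 'cV[R]_k]].

Definition Phi (m n : nat) (A : 'M[R]_(m, n)) (omega : 'cV[R]_m -> R)
  (y : 'cV[R]_n) (lam : R) (u : 'cV[R]_n) : R :=
  omega (A *m u) + (2 * lam)^-1 * enorm (u - y) ^+ 2.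

Definition Psi (m n : nat) (A : 'M[R]_(m, n)) (omega : 'cV[R]_m -> R)
  (y : 'cV[R]_n) (lam : R) (v : 'cV[R]_m) : \bar R :=
  (((2 * lam)^-1 * enorm (lam *: (A^T *m v) - y) ^+ 2)%:E + fconj omega v
   - ((2 * lam)^-1 * enorm y ^+ 2)%:E)%E.

End Defs.

From HB Require Import structures.
From mathcomp Require Import all_boot all_order all_algebra.
From mathcomp Require Import all_classical all_reals all_analysis.
From mathcomp Require Import ring lra.
Set Implicit Arguments. Unset Strict Implicit. Unset Printing Implicit Defensive.
Import Order.TTheory GRing.Theory Num.Theory.
Import numFieldNormedType.Exports.
Local Open Scope ring_scope.
Local Open Scope classical_set_scope.

(* Put x := A zbar.  Up to a constant, Psi v = Q v + omega^* v, where
   Q v = |lam A^T v - y|^2 / (2 lam) satisfies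
     Q v - Q vbar = |z(v) - zbar|^2 / (2 lam) - <v - vbar, x>.
   A finite convex function has a subgradient g at x, i.e.
   omega^* g = <x, g> - omega x.  Along the segment from vbar towards g the
   quadratic term of Psi is O(t^2) and the linear ones O(t), so minimality of
   vbar forces omega^* vbar <= <x, vbar> - omega x: vbar is a subgradient of
   omega at x.  Everything follows from this optimality condition: (i) from
     Phi u - Phi zbar = omega (A u) - omega x - <A (u - zbar), vbar> + |u - zbar|^2 / (2 lam),
   (ii) from the Fenchel-Young inequality omega^* v >= <x, v> - omega x, and
   (iii) because a subgradient of a K-Lipschitz function pairs with d to at
   most K |d|, so that Phi z - Phi zbar <= 2 K |A| |z - zbar| + |z - zbar|^2 / (2 lam),
   while |z_j - zbar| <= sqrt (2 lam d_j) by (ii). *)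

Section InnerProduct.
Variables (R : realType) (k : nat).
Implicit Types (u v w : 'cV[R]_k) (a : R).

Lemma dotvC u v : dotv u v = dotv v u.
Proof. by apply: eq_bigr => i _; rewrite mulrC. Qed.

Lemma dotvDl u w v : dotv (u + w) v = dotv u v + dotv w v.
Proof. by rewrite /dotv -big_split; apply: eq_bigr => i _; rewrite !mxE mulrDl. Qed.

Lemma dotvDr u w v : dotv v (u + w) = dotv v u + dotv v w.
Proof. by rewrite dotvC dotvDl !(dotvC v). Qed.

Lemma dotvZl a u v : dotv (a *: u) v = a * dotv u v.
Proof. by rewrite /dotv mulr_sumr; apply: eq_bigr => i _; rewrite !mxE mulrA. Qed.

Lemma dotvZr a u v : dotv v (a *: u) = a * dotv v u.
Proof. by rewrite dotvC dotvZl dotvC. Qed.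

Lemma dotvNl u v : dotv (- u) v = - dotv u v.
Proof. by rewrite -scaleN1r dotvZl mulN1r. Qed.

Lemma dotvNr u v : dotv v (- u) = - dotv v u.
Proof. by rewrite dotvC dotvNl dotvC. Qed.

Lemma dotvBl u w v : dotv (u - w) v = dotv u v - dotv w v.
Proof. by rewrite dotvDl dotvNl. Qed.

Lemma dotv0l v : dotv 0 v = 0.
Proof. by rewrite /dotv big1 // => i _; rewrite mxE mul0r. Qed.

Lemma dotv_delta v i : dotv v (delta_mx i 0) = v i 0.
Proof.
rewrite /dotv (bigD1 i) //= big1 ?addr0; first by rewrite mxE !eqxx mulr1.
by move=> j /negbTE ji; rewrite mxE ji mulr0.
Qed.

Lemma dotvv_ge0 v : 0 <= dotv v v.
Proof. by apply: sumr_ge0 => i _; rewrite -expr2 sqr_ge0. Qed.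

Lemma dotvv_eq0 v : (dotv v v == 0) = (v == 0).
Proof.
apply/idP/eqP => [|->]; last by rewrite dotv0l.
rewrite psumr_eq0 => [/allP v0|i _]; last by rewrite -expr2 sqr_ge0.
apply/matrixP => i j; rewrite ord1 mxE.
by have /implyP/(_ isT) := v0 i (mem_index_enum i); rewrite mulf_eq0 orbb => /eqP.
Qed.

Lemma enorm_ge0 v : 0 <= enorm v.
Proof. exact: sqrtr_ge0. Qed.

Lemma enorm_sqr v : enorm v ^+ 2 = dotv v v.
Proof. by rewrite sqr_sqrtr // dotvv_ge0. Qed.

Lemma enorm0 : enorm (0 : 'cV[R]_k) = 0.
Proof. by rewrite /enorm dotv0l sqrtr0. Qed.

Lemma enorm_eq0 v : (enorm v == 0) = (v == 0).
Proof. by rewrite sqrtr_eq0 le_eqVlt ltNge dotvv_ge0 orbF dotvv_eq0. Qed.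

Lemma enormZ a v : enorm (a *: v) = `|a| * enorm v.
Proof. by rewrite /enorm dotvZl dotvZr mulrA -expr2 sqrtrM ?sqr_ge0 // sqrtr_sqr. Qed.

Lemma enormN v : enorm (- v) = enorm v.
Proof. by rewrite /enorm dotvNl dotvNr opprK. Qed.

Lemma enorm_sqrD u v : enorm (u + v) ^+ 2 = enorm u ^+ 2 + 2 * dotv u v + enorm v ^+ 2.
Proof. by rewrite !enorm_sqr !dotvDl !dotvDr (dotvC v u); ring. Qed.

Lemma enorm_coord v i : `|v i 0| <= enorm v.
Proof.
rewrite -sqrtr_sqr ler_sqrt ?dotvv_ge0 // /dotv (bigD1 i) //= expr2 lerDl.
by apply: sumr_ge0 => j _; rewrite -expr2 sqr_ge0.
Qed.

End InnerProduct.

Lemma dotv_trmx (R : realType) m n (A : 'M[R]_(m, n)) w u :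
  dotv (A^T *m w) u = dotv w (A *m u).
Proof.
have dotv_mx k (a b : 'cV[R]_k) : dotv a b = (a^T *m b) 0 0.
  by rewrite /dotv mxE; apply: eq_bigr => i _; rewrite mxE.
by rewrite !dotv_mx trmx_mul trmxK mulmxA.
Qed.

Section OperatorNorm.
Variables (R : realType) (m n : nat) (A : 'M[R]_(m, n)).

Let image_unit_ball := [set enorm (A *m x) | x in [set x : 'cV[R]_n | enorm x <= 1]].

Lemma opnorm_has_sup : has_sup image_unit_ball.
Proof.
split; first by exists (enorm (A *m 0)), 0; rewrite //= enorm0 ler01.
pose r i := \sum_j `|A i j|.
exists (Num.sqrt (\sum_i r i ^+ 2)) => _ [x /= x1 <-].
rewrite ler_sqrt; last by apply: sumr_ge0 => i _; rewrite sqr_ge0.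
apply: ler_sum => i _.
have : `|(A *m x) i 0| <= r i.
  rewrite mxE (le_trans (ler_norm_sum _ _ _)) //; apply: ler_sum => j _.
  by rewrite normrM ler_piMr // (le_trans (enorm_coord x j)).
by rewrite ler_norml -expr2 => /andP[]; nra.
Qed.

Lemma opnorm_ge0 : 0 <= opnorm A.
Proof.
apply: le_trans (sup_upper_bound opnorm_has_sup _); last first.
  by exists 0; rewrite //= enorm0 ler01.
by rewrite mulmx0 enorm0.
Qed.

Lemma enorm_mulmx_le w : enorm (A *m w) <= opnorm A * enorm w.
Proof.
have [->|w0] := eqVneq w 0; first by rewrite mulmx0 !enorm0 mulr0.
have wpos : 0 < enorm w by rewrite lt0r enorm_eq0 w0 enorm_ge0.
have winv_ge0 : 0 <= (enorm w)^-1 by rewrite invr_ge0 enorm_ge0.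
have unit_w : enorm ((enorm w)^-1 *: w) <= 1.
  by rewrite enormZ ger0_norm // mulVf ?gt_eqF.
have := sup_upper_bound opnorm_has_sup (ex_intro2 _ _ ((enorm w)^-1 *: w) unit_w erefl).
by rewrite -scalemxAr enormZ ger0_norm // mulrC ler_pdivrMr.
Qed.

Lemma opnorm_eq0_dim0 : (forall u : 'cV[R]_m, u = 0) -> opnorm A = 0.
Proof.
move=> trivial_m; apply/le_anti; rewrite opnorm_ge0 andbT.
apply: ge_sup; first by exists (enorm (A *m 0)), 0; rewrite //= enorm0 ler01.
by move=> _ [x _ <-]; rewrite (trivial_m (A *m x)) enorm0.
Qed.

End OperatorNorm.

Definition subgradient_on (R : realType) k (P : set 'cV[R]_k)
    (f : 'cV[R]_k -> R) (x g : 'cV[R]_k) :=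
  forall a, P a -> f x + dotv a g <= f (x + a).

Notation subgradient := (subgradient_on setT).

Section SubgradientExtension.
Variables (R : realType) (k : nat) (f : 'cV[R]_k -> R) (x : 'cV[R]_k).
Hypothesis f_convex : convex_fun f.
Variable P : set 'cV[R]_k.
Hypothesis P0 : P 0.
Hypothesis P_convex : forall a b t, P a -> P b -> 0 <= t -> t <= 1 ->
  P (t *: a + (1 - t) *: b).
Variables (g e : 'cV[R]_k).
Hypothesis g_sub : subgradient_on P f x g.

Lemma convex_slope_le a b r s : P a -> P b -> 0 < r -> 0 < s ->
  s * (f x + dotv a g - f (x + a - r *: e))
    <= r * (f (x + b + s *: e) - f x - dotv b g).
Proof.
move=> Pa Pb r_gt0 s_gt0; have D_gt0 : 0 < r + s by rewrite addr_gt0.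
have D_neq0 : r + s != 0 by rewrite gt_eqF.
have [t t_def] : {t | t = s / (r + s)} by exists (s / (r + s)).
have t_ge0 : 0 <= t by rewrite t_def divr_ge0 ?ltW.
have t_le1 : t <= 1 by rewrite t_def ler_pdivrMr // mul1r lerDr ltW.
have comb : t *: (x + a - r *: e) + (1 - t) *: (x + b + s *: e)
            = x + (t *: a + (1 - t) *: b).
  by apply/matrixP => i j; rewrite !mxE t_def; field.
have := f_convex (x + a - r *: e) (x + b + s *: e) t_ge0 t_le1.
have := g_sub (P_convex Pa Pb t_ge0 t_le1).
rewrite comb dotvDl !dotvZl => sub_w /(le_trans sub_w).
move: (f (x + a - r *: e)) (f (x + b + s *: e)) => fu fv convexity.
have s_eq : s = t * (r + s) by rewrite t_def mulfVK.
have r_eq : r = (1 - t) * (r + s) by rewrite t_def; field.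
move: (r + s) D_gt0 s_eq r_eq => D D_gt0 -> ->; nra.
Qed.

(* The one-dimensional Hahn-Banach step: by convexity every left difference
   quotient of f along e lies below every right one, and c is their separating
   supremum. *)
Lemma subgradient_on_extend :
  exists c, forall a s, P a -> f x + dotv a g + s * c <= f (x + a + s *: e).
Proof.
pose lo a r := (f x + dotv a g - f (x + a - r *: e)) / r.
pose hi b s := (f (x + b + s *: e) - f x - dotv b g) / s.
have lo_le_hi a r b s : P a -> 0 < r -> P b -> 0 < s -> lo a r <= hi b s.
  move=> Pa r_gt0 Pb s_gt0.
  rewrite ler_pdivrMr // mulrAC ler_pdivlMr // mulrC [X in _ <= X]mulrC.
  exact: convex_slope_le.
pose L := [set lo a r | a in P & r in [set r | 0 < r]].
have L_lo01 : L (lo 0 1) by exists 0 => //; exists 1 => //=; exact: ltr01.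
have L_sup : has_sup L.
  split; first by exists (lo 0 1).
  by exists (hi 0 1) => _ [a Pa [r r_gt0 <-]]; apply: lo_le_hi.
exists (sup L) => a s Pa.
have [s_lt0|s_gt0|->] := ltgtP s 0.
- have L_lo : L (lo a (- s)) by exists a => //; exists (- s) => //=; rewrite oppr_gt0.
  have := sup_upper_bound L_sup L_lo.
  rewrite /lo scaleNr opprK ler_pdivrMr ?oppr_gt0 //; lra.
- have : sup L <= hi a s.
    apply: ge_sup; first by exists (lo 0 1).
    by move=> _ [b Pb [r r_gt0 <-]]; exact: lo_le_hi.
  rewrite /hi ler_pdivlMr //; lra.
- by rewrite mul0r scale0r !addr0; apply: g_sub.
Qed.

End SubgradientExtension.

Section SubgradientExistence.
Variables (R : realType) (k : nat) (f : 'cV[R]_k -> R) (x : 'cV[R]_k).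
Hypothesis f_convex : convex_fun f.

Let supported j := [set a : 'cV[R]_k | forall i : 'I_k, (j <= i)%N -> a i 0 = 0].

Lemma subgradient_on_supported j : (j <= k)%N ->
  exists g, subgradient_on (supported j) f x g.
Proof.
elim: j => [_|j IH jk].
  exists 0 => a a0; have -> : a = 0.
    by apply/matrixP => i l; rewrite ord1 a0 // mxE.
  by rewrite dotv0l !addr0.
have [g g_sub] := IH (ltnW jk).
pose j' := Ordinal jk; pose e : 'cV[R]_k := delta_mx j' 0.
have [||c g_ext] := @subgradient_on_extend _ _ f x f_convex (supported j) _ _ g e g_sub.
- by move=> i _; rewrite mxE.
- by move=> a b t Pa Pb _ _ i ji; rewrite !mxE Pa // Pb // !mulr0 addr0.
exists (g + (c - g j' 0) *: e) => d Pd.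
pose s := d j' 0.
have Pa : supported j (d - s *: e).
  move=> i ji; rewrite !mxE andbT.
  have [->|ne] := eqVneq i j'; first by rewrite mulr1 subrr.
  rewrite mulr0 subr0 Pd // ltn_neqAle ji andbT.
  by apply: contra ne => /eqP ij; apply/eqP/val_inj.
have -> : dotv d (g + (c - g j' 0) *: e) = dotv (d - s *: e) g + s * c.
  by rewrite dotvDr dotvZr dotv_delta dotvBl dotvZl (dotvC e) dotv_delta /s; ring.
by rewrite addrA; have := g_ext _ s Pa; rewrite -[x + _ + s *: e]addrA subrK.
Qed.

Lemma convex_subgradient_exists : exists g, subgradient f x g.
Proof.
have [g g_sub] := subgradient_on_supported (leqnn k).
by exists g => a _; apply: g_sub => i; rewrite leqNgt ltn_ord.
Qed.

End SubgradientExistence.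

Section FenchelConjugate.
Variables (R : realType) (k : nat) (f : 'cV[R]_k -> R).
Local Open Scope ereal_scope.

Lemma fconj_ge w v : (dotv w v - f w)%:E <= fconj f v.
Proof. by apply: ereal_sup_ubound; exists w. Qed.

Lemma fconj_le v r : (forall w, dotv w v - f w <= r)%R -> fconj f v <= r%:E.
Proof. by move=> le_r; apply: ge_ereal_sup => _ [w _ <-]; rewrite lee_fin. Qed.

Lemma fconj_neqNy v : fconj f v != -oo.
Proof. by rewrite -ltNye (lt_le_trans _ (fconj_ge 0 v)) ?ltNyr. Qed.

Lemma fconj_real v r : fconj f v <= r%:E -> exists c, fconj f v = c%:E.
Proof.
have := fconj_neqNy v.
by case: (fconj f v) => [c _ _| _ |//]; [exists c | rewrite leye_eq].
Qed.

Lemma fconj_convex u v t a b : (0 <= t)%R -> (t <= 1)%R ->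
  fconj f u <= a%:E -> fconj f v <= b%:E ->
  fconj f (t *: u + (1 - t) *: v) <= (t * a + (1 - t) * b)%:E.
Proof.
move=> t_ge0 t_le1 fu fv; apply: fconj_le => w.
have := le_trans (fconj_ge w u) fu; have := le_trans (fconj_ge w v) fv.
rewrite !lee_fin dotvDr !dotvZr => hv hu.
have t'_ge0 : (0 <= 1 - t)%R by rewrite subr_ge0.
nra.
Qed.

Lemma subgradient_fconjE x g : subgradient f x g <-> fconj f g = (dotv x g - f x)%:E.
Proof.
split=> [g_sub|fg a _].
  apply/le_anti; rewrite fconj_ge andbT; apply: fconj_le => w.
  by have := g_sub (w - x)%R I; rewrite [(x + _)%R]addrC subrK dotvBl; lra.
by have := fconj_ge (x + a)%R g; rewrite fg lee_fin dotvDl; lra.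
Qed.

End FenchelConjugate.

Section Lipschitz.
Variables (R : realType) (m n : nat) (f : 'cV[R]_m -> R) (K : R).
Hypothesis f_lip : lipschitz_with K f.

Lemma lipschitz_subgradient_le x g a : subgradient f x g -> dotv a g <= K * enorm a.
Proof.
move=> g_sub; have := g_sub a I; have := f_lip (x + a) x.
by rewrite addrAC subrr add0r => /(le_trans (ler_norm _)); lra.
Qed.

Lemma lipschitz_lt0_dim0 : K < 0 -> forall u : 'cV[R]_m, u = 0.
Proof.
move=> K_lt0 u; apply/eqP; rewrite -enorm_eq0 eq_le enorm_ge0 andbT.
have := f_lip u 0; rewrite subr0; have := normr_ge0 (f u - f 0); nra.
Qed.

Lemma lipschitz_mulmx_le (A : 'M[R]_(m, n)) w :
  K * enorm (A *m w) <= K * opnorm A * enorm w.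
Proof.
have [K_lt0|K_ge0] := ltrP K 0; last by rewrite -mulrA ler_wpM2l ?enorm_mulmx_le.
have A0 := opnorm_eq0_dim0 A (lipschitz_lt0_dim0 K_lt0).
by rewrite (lipschitz_lt0_dim0 K_lt0 (A *m w)) A0 enorm0 !mulr0 mul0r.
Qed.

Lemma lipschitz_opnorm_ge0 (A : 'M[R]_(m, n)) : 0 <= K * opnorm A.
Proof.
have [K_lt0|K_ge0] := ltrP K 0; last by rewrite mulr_ge0 ?opnorm_ge0.
by rewrite (opnorm_eq0_dim0 A (lipschitz_lt0_dim0 K_lt0)) mulr0.
Qed.

End Lipschitz.

Section RealInequalities.
Variable R : realType.
Implicit Types (a b c d r M : R).

Lemma ler_of_le_addt a b M : (forall t, 0 < t -> t <= 1 -> a <= b + t * M) -> a <= b.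
Proof.
move=> le_ab; apply/ler_addgt0Pr => e e_gt0.
have D_gt0 : 0 < e + `|M| by rewrite ltr_wpDr.
pose t := e / (e + `|M|).
have t_gt0 : 0 < t by rewrite divr_gt0.
have t_le1 : t <= 1 by rewrite ler_pdivrMr // mul1r lerDl.
have tM_le : t * M <= e.
  rewrite (le_trans (ler_wpM2l (ltW t_gt0) (ler_norm M))) // mulrAC.
  by rewrite ler_pdivrMr //; nra.
by have := le_ab t t_gt0 t_le1; lra.
Qed.

Lemma le_sqrt_of_sqr_le c r d : 0 < c -> 0 <= r -> c^-1 * r ^+ 2 <= d ->
  r <= Num.sqrt (c * d).
Proof.
move=> c_gt0 r_ge0 le_d.
have cd_ge0 : 0 <= c * d.
  apply: mulr_ge0 (ltW c_gt0) (le_trans _ le_d).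
  by rewrite mulr_ge0 ?sqr_ge0 // invr_ge0 ltW.
rewrite -(ger0_norm r_ge0) -sqrtr_sqr ler_sqrt //.
by rewrite -ler_pdivrMl.
Qed.

Lemma cvg_to0_of_sqr_le_gap c (r : nat -> R) (p : nat -> \bar R) l : 0 < c ->
  (forall j, 0 <= r j) -> (forall j, ((c^-1 * r j ^+ 2)%:E <= p j - l%:E)%E) ->
  p @ \oo --> l%:E -> r @ \oo --> 0.
Proof.
move=> c_gt0 r_ge0 r_le /fine_cvgP[p_fin p_cvg].
apply: (squeeze_cvgr (f := fun=> 0) (h := fun j => Num.sqrt (c * (fine (p j) - l)))).
- near=> j; have pj_fin : p j \is a fin_num by near: j.
  have := r_le j; rewrite -(fineK pj_fin) -EFinB lee_fin r_ge0 /=.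
  exact: le_sqrt_of_sqr_le.
- exact: cvg_cst.
- have -> : 0 = Num.sqrt (c * (l - l)) by rewrite subrr mulr0 sqrtr0.
  apply: (continuous_cvg _ (@sqrt_continuous R _)).
  by apply: cvgM; [exact: cvg_cst | apply: cvgB => //; exact: cvg_cst].
Unshelve. all: by end_near.
Qed.

End RealInequalities.

Section Duality.
Variables (R : realType) (m n : nat) (A : 'M[R]_(m, n)) (omega : 'cV[R]_m -> R).
Variables (y : 'cV[R]_n) (lam : R).
Hypothesis lam_gt0 : 0 < lam.

Local Notation Phi := (Phi A omega y lam).
Local Notation Psi := (Psi A omega y lam).
Local Notation primal v := (y - lam *: (A^T *m v)).
Local Notation dual_quad v := ((2 * lam)^-1 * enorm (lam *: (A^T *m v) - y) ^+ 2).

Lemma Psi_fconjE v c : fconj omega v = c%:E ->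
  Psi v = (dual_quad v + c - (2 * lam)^-1 * enorm y ^+ 2)%:E.
Proof. by move=> fv; rewrite /Psi fv. Qed.

Lemma Psi_fconj_pinfty v : fconj omega v = +oo%E -> Psi v = +oo%E.
Proof. by move=> fv; rewrite /Psi fv. Qed.

Lemma dual_quad_subE v v0 : dual_quad v - dual_quad v0
  = (2 * lam)^-1 * enorm (primal v - primal v0) ^+ 2 - dotv (v - v0) (A *m primal v0).
Proof.
have zB : primal v - primal v0 = - (lam *: (A^T *m (v - v0))).
  rewrite mulmxBr; move: (A^T *m v) (A^T *m v0) => p q.
  by apply/matrixP => i j; rewrite !mxE; ring.
rewrite -[lam *: (A^T *m v) - y]opprB -[lam *: (A^T *m v0) - y]opprB !enormN.
rewrite -{1}(subrK (primal v0) (primal v)) [in X in X = _]enorm_sqrD zB.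
rewrite dotvNl dotvZl dotv_trmx !enormN.
by field; rewrite gt_eqF.
Qed.

Lemma Phi_subE vbar u : Phi u - Phi (primal vbar)
  = omega (A *m u) - omega (A *m primal vbar) - dotv (A *m (u - primal vbar)) vbar
    + (2 * lam)^-1 * enorm (u - primal vbar) ^+ 2.
Proof.
rewrite /Phi; have -> : u - y = (u - primal vbar) + (primal vbar - y) by rewrite addrA subrK.
have -> : primal vbar - y = - (lam *: (A^T *m vbar)) by rewrite addrAC subrr add0r.
rewrite enorm_sqrD enormN dotvNr dotvZr dotvC dotv_trmx (dotvC vbar) enormZ.
by rewrite (ger0_norm (ltW lam_gt0)); field; rewrite gt_eqF.
Qed.


Lemma Psi_argmin_subgradient vbar : convex_fun omega ->
  (forall v, Psi vbar <= Psi v)%E -> subgradient omega (A *m primal vbar) vbar.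
Proof.
move=> omega_convex vbar_min; set x := A *m primal vbar.
have [g g_sub] := convex_subgradient_exists x omega_convex.
have fg := (subgradient_fconjE _ _ _).1 g_sub.
have [c fvbar] : exists c, fconj omega vbar = c%:E.
  have := vbar_min g; rewrite (Psi_fconjE fg).
  case fv: (fconj omega vbar) => [c| |]; first by exists c.
    by rewrite (Psi_fconj_pinfty fv).
  by have := fconj_neqNy omega vbar; rewrite fv.
apply/subgradient_fconjE/le_anti; rewrite fconj_ge andbT fvbar lee_fin.
pose M := (2 * lam)^-1 * enorm (primal g - primal vbar) ^+ 2.
apply: (@ler_of_le_addt _ _ _ M) => t t_gt0 t_le1.
pose vt := t *: g + (1 - t) *: vbar.
have fvt_le : (fconj omega vt <= (t * (dotv x g - omega x) + (1 - t) * c)%:E)%E.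
  by apply: fconj_convex; rewrite ?fg ?fvbar // ltW.
have [ct fvt] := fconj_real fvt_le.
have := vbar_min vt; rewrite (Psi_fconjE fvbar) (Psi_fconjE fvt) lee_fin.
have zt : primal vt - primal vbar = t *: (primal g - primal vbar).
  rewrite /vt mulmxDr -!scalemxAr; move: (A^T *m g) (A^T *m vbar) => p q.
  by apply/matrixP => i j; rewrite !mxE; ring.
have dt : vt - vbar = t *: (g - vbar).
  by apply/matrixP => i j; rewrite !mxE; ring.
have := dual_quad_subE vt vbar.
rewrite zt dt enormZ (ger0_norm (ltW t_gt0)) exprMn dotvZl dotvBl.
move: fvt_le; rewrite fvt lee_fin -/x (dotvC x g) (dotvC x vbar) => fvt_le quad min_vt.
rewrite /M -(ler_pM2l t_gt0); lra.
Qed.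

Section Optimality.
Variable vbar : 'cV[R]_m.
Hypothesis vbar_sub : subgradient omega (A *m primal vbar) vbar.

Lemma Psi_subgradient_fin_num : Psi vbar \is a fin_num.
Proof. by rewrite (Psi_fconjE ((subgradient_fconjE _ _ _).1 vbar_sub)). Qed.

Lemma Psi_gap_ge v :
  (((2 * lam)^-1 * enorm (primal v - primal vbar) ^+ 2)%:E <= Psi v - Psi vbar)%E.
Proof.
rewrite (Psi_fconjE ((subgradient_fconjE _ _ _).1 vbar_sub)).
case fv: (fconj omega v) => [c| |]; last 2 first.
- by rewrite (Psi_fconj_pinfty fv) /= leey.
- by have := fconj_neqNy omega v; rewrite fv.
rewrite (Psi_fconjE fv) -EFinB lee_fin.
have := fconj_ge omega (A *m primal vbar) v; rewrite fv lee_fin.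
have := dual_quad_subE v vbar; rewrite dotvBl !(dotvC _ (A *m primal vbar)).
lra.
Qed.

Lemma Phi_argmin u : Phi (primal vbar) <= Phi u.
Proof.
rewrite -subr_ge0 Phi_subE.
have := @vbar_sub (A *m (u - primal vbar)) I; rewrite -mulmxDr [primal vbar + _]addrC subrK.
have : 0 <= (2 * lam)^-1 * enorm (u - primal vbar) ^+ 2.
  by rewrite mulr_ge0 ?sqr_ge0 // invr_ge0 mulr_ge0 // ltW.
lra.
Qed.

Variable K : R.
Hypothesis omega_lip : lipschitz_with K omega.

Lemma Phi_gap_le u : Phi u - Phi (primal vbar)
  <= 2 * (K * opnorm A) * enorm (u - primal vbar)
     + (2 * lam)^-1 * enorm (u - primal vbar) ^+ 2.
Proof.
rewrite Phi_subE; set w := u - primal vbar.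
have omega_le : omega (A *m u) - omega (A *m primal vbar) <= K * enorm (A *m w).
  have := omega_lip (A *m u) (A *m primal vbar).
  by rewrite -mulmxBr; apply: le_trans (ler_norm _).
have vbar_le : - dotv (A *m w) vbar <= K * enorm (A *m w).
  by rewrite -dotvNl -enormN; apply: lipschitz_subgradient_le vbar_sub.
have := lipschitz_mulmx_le omega_lip A w.
lra.
Qed.

Lemma Phi_gap_le_sqrt u d : (2 * lam)^-1 * enorm (u - primal vbar) ^+ 2 <= d ->
  Phi u - Phi (primal vbar)
    <= Num.sqrt d * (2 * Num.sqrt (2 * lam) * K * opnorm A + Num.sqrt d).
Proof.
move=> le_d; have lam2_gt0 : 0 < 2 * lam by rewrite mulr_gt0.
have d_ge0 : 0 <= d.
  by apply: le_trans le_d; rewrite mulr_ge0 ?sqr_ge0 // invr_ge0 ltW.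
have := le_sqrt_of_sqr_le lam2_gt0 (enorm_ge0 _) le_d.
rewrite sqrtrM ?(ltW lam2_gt0) // => /(ler_wpM2l (lipschitz_opnorm_ge0 omega_lip A)).
have := Phi_gap_le u; rewrite mulrDr -expr2 sqr_sqrtr //.
lra.
Qed.

End Optimality.

End Duality.

Theorem theorem2p21 (R : realType) (m n : nat) (A : 'M[R]_(m, n))
  (omega : 'cV[R]_m -> R) (K : R)
  (Hconv : convex_fun omega) (Hlip : lipschitz_with K omega)
  (y : 'cV[R]_n) (lam : R) (Hlam : 0 < lam)
  (vbar : 'cV[R]_m)
  (Hmin : forall v : 'cV[R]_m, (Psi A omega y lam vbar <= Psi A omega y lam v)%E)
  (vs : nat -> 'cV[R]_m)
  (Hcv : (fun j => Psi A omega y lam (vs j)) @ \oo --> Psi A omega y lam vbar) :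
  let z := fun j => y - lam *: (A^T *m vs j) in
  let zbar := y - lam *: (A^T *m vbar) in
  (* (i) *)
  (forall u : 'cV[R]_n, Phi A omega y lam zbar <= Phi A omega y lam u) /\
  (* (ii) *)
  (forall j, (((2 * lam)^-1 * enorm (z j - zbar) ^+ 2)%:E
               <= Psi A omega y lam (vs j) - Psi A omega y lam vbar)%E) /\
  ((fun j => enorm (z j - zbar)) @ \oo --> 0) /\
  (* (iii) : when Psi(v_j) = +oo the right-hand side is +oo and the bound is trivial *)
  (forall j, Psi A omega y lam (vs j) \is a fin_num ->
     let d := fine (Psi A omega y lam (vs j) - Psi A omega y lam vbar)%E in
     Phi A omega y lam (z j) - Phi A omega y lam zbar
       <= Num.sqrt d * (2 * Num.sqrt (2 * lam) * K * opnorm A + Num.sqrt d)).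
Proof.
move=> z zbar.
have vbar_sub := Psi_argmin_subgradient Hlam Hconv Hmin.
have vbar_fin := Psi_subgradient_fin_num vbar_sub.
have gap := Psi_gap_ge Hlam vbar_sub.
split; first exact: Phi_argmin.
split; first by move=> j; apply: gap.
split.
  apply: (@cvg_to0_of_sqr_le_gap _ (2 * lam) _ _ (fine (Psi A omega y lam vbar))).
  - by rewrite mulr_gt0.
  - by move=> j; apply: enorm_ge0.
  - by move=> j; rewrite fineK //; apply: gap.
  - by rewrite fineK.
move=> j vj_fin; apply: (Phi_gap_le_sqrt Hlam vbar_sub Hlip).
by rewrite -lee_fin fineK ?gap // fin_numB vj_fin vbar_fin.
Qed.
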